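(* Let $I=\langle Q,D,\tau_{in},\tau_{out}\rangle$ be an instance of DTP, and let $C_I$ be the set consisting of all objects occurring in $\Pi_Q\cup D$ together with one fresh object $o_I$. Then DTP holds for $I$ if and only if for every tuple $\vec o$ over $C_I$ and every $\tau_{in}$-update $U$ involving only objects in $C_I$, $\vec o\in Q(D\cup U,\tau_{out})$ implies $\vec o\in Q(D,\tau_{out})$.
   Context: Temporal Datalog. Constants are partitioned into objects and integer time points; variables into object variables and time variables. A time term is a time point, a time variable, or an expression $t+k$ with $t$ a time variable and $k\in\mathbb{Z}$. Each predicate is either extensional (EDB) or intensional (IDB) and has an arity $n\ge0$, each position being of object sort or time sort; a predicate is rigid if all its positions are of object sort, and temporal if its last position is of time sort and all others are of object sort. An atom $P(t_1,\dots,t_n)$ has terms of the required sorts. A rule is $\bigwedge_i\alpha_i\to\alpha$ with $\alpha$ and all $\alpha_i$ rigid or temporal atoms, $\alpha$ IDB whenever the body is nonempty, and every head variable occurring in the body. A program is a finite set of rules. A fact is a ground rigid or temporal atom without $+$ (identified with the rule $\top\to\alpha$); a dataset is a finite set of EDB facts. Rules are read as universally quantified first-order sentences with $+$ interpreted as integer addition; $\Pi\models\alpha$ denotes entailment. A query is $Q=\langle P_Q,\Pi_Q\rangle$ with $\Pi_Q$ a program and $P_Q$ an IDB predicate of $\Pi_Q$; it is temporal if $P_Q$ is temporal. For a temporal query $Q$, dataset $D$ and time point $\tau$, $Q(D,\tau)$ is the set of tuples of objects $\vec o$ with $\Pi_Q\cup D\models P_Q(\vec o,\tau)$. A $\tau_{in}$-history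 is a dataset consisting of rigid facts and temporal facts with time argument $\le\tau_{in}$; a $\tau_{in}$-update is a dataset consisting of temporal facts with time argument $>\tau_{in}$. Definitive Time Point (DTP): an instance is $\langle Q,D,\tau_{in},\tau_{out}\rangle$ with $Q$ a temporal query, $D$ a $\tau_{in}$-history and $\tau_{out}\le\tau_{in}$; DTP holds for it iff $Q(D,\tau_{out})=Q(D\cup U,\tau_{out})$ for every $\tau_{in}$-update $U$. *)

From Stdlib Require Import ZArith List.
Import ListNotations.
Open Scope Z_scope.

(* Objects are represented by natural numbers (an infinite supply, so fresh
   objects exist); time points are integers. *)
Definition object := nat.
Definition timept := Z.

Inductive sort := SObj | STime.

(* A predicate: a name, a sort signature (one sort per position; the arity is
   its length), and whether it is intensional (IDB, true) or extensional. *)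
Record pred := mkPred { pname : nat; psig : list sort; pidb : bool }.

Definition rigid_pred (p : pred) : Prop := Forall (fun s => s = SObj) (psig p).
Definition temporal_pred (p : pred) : Prop :=
  exists l, psig p = l ++ [STime] /\ Forall (fun s => s = SObj) l.

Inductive term :=
| OConst (o : object)
| OVar (x : nat)
| TConst (t : timept)
| TVar (x : nat)
| TPlus (x : nat) (k : Z).

Definition term_sort (t : term) : sort :=
  match t with OConst _ | OVar _ => SObj | _ => STime end.

Record atom := mkAtom { apred : pred; aargs : list term }.

Definition well_sorted (a : atom) : Prop :=
  map term_sort (aargs a) = psig (apred a).

Definition rt_atom (a : atom) : Prop :=
  well_sorted a /\ (rigid_pred (apred a) \/ temporal_pred (apred a)).

Definition term_vars (t : term) : list (bool * nat) :=
  match t with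
  | OVar x => [(true, x)]
  | TVar x | TPlus x _ => [(false, x)]
  | _ => []
  end.
Definition atom_vars (a : atom) : list (bool * nat) :=
  flat_map term_vars (aargs a).

Record rule := mkRule { rbody : list atom; rhead : atom }.

Definition wf_rule (r : rule) : Prop :=
  rt_atom (rhead r) /\ Forall rt_atom (rbody r) /\
  (rbody r <> [] -> pidb (apred (rhead r)) = true) /\
  (forall v, In v (atom_vars (rhead r)) -> In v (flat_map atom_vars (rbody r))).

Definition program := list rule.
Definition wf_program (P : program) : Prop := Forall wf_rule P.

Definition ground_noplus (t : term) : Prop :=
  match t with OConst _ | TConst _ => True | _ => False end.
Definition is_fact (a : atom) : Prop :=
  rt_atom a /\ Forall ground_noplus (aargs a).

Definition dataset := list atom.
Definition is_dataset (D : dataset) : Prop :=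
  Forall (fun a => is_fact a /\ pidb (apred a) = false) D.

Definition fact_rule (a : atom) : rule := mkRule [] a.
Definition with_data (P : program) (D : dataset) : program := P ++ map fact_rule D.

(* First-order semantics: object sort interpreted by an arbitrary domain Dom
   (object constants interpreted arbitrarily), time sort by the integers with
   + as integer addition. *)
Inductive value (Dom : Type) := VObj (d : Dom) | VTime (z : Z).
Arguments VObj {Dom} d.
Arguments VTime {Dom} z.

Record interp (Dom : Type) := mkInterp {
  iconst : object -> Dom;
  irel : pred -> list (value Dom) -> Prop }.
Arguments iconst {Dom} i o.
Arguments irel {Dom} i p l.

Definition eval_term {Dom : Type} (I : interp Dom)
  (vo : nat -> Dom) (vt : nat -> Z) (t : term) : value Dom :=
  match t with
  | OConst o => VObj (iconst I o)
  | OVar x => VObj (vo x)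
  | TConst z => VTime z
  | TVar x => VTime (vt x)
  | TPlus x k => VTime (vt x + k)
  end.

Definition holds_atom {Dom : Type} (I : interp Dom)
  (vo : nat -> Dom) (vt : nat -> Z) (a : atom) : Prop :=
  irel I (apred a) (map (eval_term I vo vt) (aargs a)).

Definition sat_rule {Dom : Type} (I : interp Dom) (r : rule) : Prop :=
  forall vo vt, Forall (holds_atom I vo vt) (rbody r) -> holds_atom I vo vt (rhead r).

Definition model {Dom : Type} (I : interp Dom) (P : program) : Prop :=
  Forall (sat_rule I) P.

Definition entails (P : program) (a : atom) : Prop :=
  forall (Dom : Type) (I : interp Dom), model I P ->
    forall vo vt, holds_atom I vo vt a.

Record query := mkQuery { qpred : pred; qprog : program }.

Definition preds_of_program (P : program) : list pred :=
  flat_map (fun r => apred (rhead r) :: map apred (rbody r)) P.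

Definition temporal_query (Q : query) : Prop :=
  wf_program (qprog Q) /\ pidb (qpred Q) = true /\
  In (qpred Q) (preds_of_program (qprog Q)) /\ temporal_pred (qpred Q).

(* o \in Q(D, tau): o is a tuple of objects (of the right length) with
   Pi_Q \cup D |= P_Q(o, tau). *)
Definition answer (Q : query) (D : dataset) (tau : timept) (o : list object) : Prop :=
  S (length o) = length (psig (qpred Q)) /\
  entails (with_data (qprog Q) D) (mkAtom (qpred Q) (map OConst o ++ [TConst tau])).

Definition fact_time (a : atom) : option Z :=
  match rev (aargs a) with TConst z :: _ => Some z | _ => None end.

Definition history (tin : timept) (D : dataset) : Prop :=
  is_dataset D /\
  Forall (fun a => rigid_pred (apred a) \/
                   (temporal_pred (apred a) /\ exists z, fact_time a = Some z /\ z <= tin)) D.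

Definition update (tin : timept) (U : dataset) : Prop :=
  is_dataset U /\
  Forall (fun a => temporal_pred (apred a) /\
                   exists z, fact_time a = Some z /\ tin < z) U.

Definition DTP_instance (Q : query) (D : dataset) (tin tout : timept) : Prop :=
  temporal_query Q /\ history tin D /\ tout <= tin.

Definition DTP (Q : query) (D : dataset) (tin tout : timept) : Prop :=
  forall U, update tin U ->
    forall o, answer Q D tout o <-> answer Q (D ++ U) tout o.

Definition term_objs (t : term) : list object :=
  match t with OConst o => [o] | _ => [] end.
Definition atom_objs (a : atom) : list object := flat_map term_objs (aargs a).
Definition rule_objs (r : rule) : list object :=
  atom_objs (rhead r) ++ flat_map atom_objs (rbody r).
Definition program_objs (P : program) : list object := flat_map rule_objs P.
Definition dataset_objs (D : dataset) : list object := flat_map atom_objs D.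

(* Adding an update only shrinks the class of models, so Q(D, tout) is always
   contained in Q(D ∪ U, tout); the point is the converse.  Entailment is
   invariant under renamings of objects that fix the objects of Pi_Q ∪ D, so
   collapsing every other object of an update U and of an answer tuple onto the
   fresh object o_I turns a counterexample into one over C_I.  The collapse
   cannot hide a genuine counterexample: in the model over [option object]
   sending o_I to [None] and making a tuple true iff it avoids [None], every
   rule holds (head variables occur in the body), so no entailed fact mentions
   an object foreign to Pi_Q ∪ D, and hence the collapsed answer is the
   original one. *)
From Stdlib Require Import ZArith List.
Import ListNotations.

Lemma entails_with_data_app (P : program) (D U : dataset) (a : atom) :
  entails (with_data P D) a -> entails (with_data P (D ++ U)) a.
Proof.
  unfold entails, with_data, model; intros HDa Dom I HM vo vt.
  apply HDa. rewrite map_app, app_assoc, Forall_app in HM. tauto.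
Qed.

Definition rename_term (f : object -> object) (t : term) : term :=
  match t with OConst o => OConst (f o) | t => t end.

Definition rename_atom (f : object -> object) (a : atom) : atom :=
  mkAtom (apred a) (map (rename_term f) (aargs a)).

Definition comp_interp {Dom : Type} (I : interp Dom) (f : object -> object) : interp Dom :=
  mkInterp Dom (fun o => iconst I (f o)) (irel I).

Section Renaming.

Variables (Dom : Type) (I : interp Dom) (f : object -> object).

Lemma holds_atom_comp_interp vo vt a :
  holds_atom (comp_interp I f) vo vt a <-> holds_atom I vo vt (rename_atom f a).
Proof.
  unfold holds_atom, rename_atom; simpl; rewrite map_map.
  rewrite (map_ext _ (fun t => eval_term I vo vt (rename_term f t))) by (now destruct a0).
  tauto.
Qed.

Lemma rename_atom_id_on a :
  (forall x, In x (atom_objs a) -> f x = x) -> rename_atom f a = a.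
Proof.
  destruct a as [p args]; unfold rename_atom, atom_objs; simpl; intros Hfix.
  f_equal; rewrite <- (map_id args) at 2; apply map_ext_in; intros t Ht.
  destruct t; simpl; auto.
  f_equal; apply Hfix, in_flat_map; exists (OConst o); simpl; auto.
Qed.

Lemma holds_atom_comp_interp_id_on vo vt a :
  (forall x, In x (atom_objs a) -> f x = x) ->
  holds_atom (comp_interp I f) vo vt a <-> holds_atom I vo vt a.
Proof. intros Hfix; rewrite holds_atom_comp_interp, rename_atom_id_on; tauto. Qed.

Lemma sat_rule_comp_interp r :
  (forall x, In x (rule_objs r) -> f x = x) ->
  sat_rule I r -> sat_rule (comp_interp I f) r.
Proof.
  unfold sat_rule, rule_objs; intros Hfix Hr vo vt Hbody.
  apply holds_atom_comp_interp_id_on; [intros; apply Hfix, in_or_app; auto|].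
  apply Hr; rewrite Forall_forall in *; intros b Hb.
  apply (holds_atom_comp_interp_id_on vo vt b); auto.
  intros x Hx; apply Hfix, in_or_app; right; apply in_flat_map; eauto.
Qed.

End Renaming.

(* The renamed update enters only as facts, whose truth in [I] is that of the
   original facts in [comp_interp I f]. *)
Lemma entails_rename (P : program) (D U : dataset) (a : atom) (f : object -> object) :
  (forall x, In x (program_objs P ++ dataset_objs D) -> f x = x) ->
  entails (with_data P (D ++ U)) a ->
  entails (with_data P (D ++ map (rename_atom f) U)) (rename_atom f a).
Proof.
  intros Hfix Ha Dom I HM vo vt.
  apply (holds_atom_comp_interp Dom I f); apply Ha.
  unfold model, with_data in *; rewrite !map_app, !Forall_app in *.
  destruct HM as [HP [HD HU]]; rewrite Forall_forall in HP, HD, HU.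
  split; [|split]; apply Forall_forall; intros r Hr.
  - apply sat_rule_comp_interp; auto.
    intros x Hx; apply Hfix, in_or_app; left; apply in_flat_map; eauto.
  - apply sat_rule_comp_interp; auto.
    apply in_map_iff in Hr; destruct Hr as [d [<- Hd]].
    unfold rule_objs; simpl; rewrite app_nil_r.
    intros x Hx; apply Hfix, in_or_app; right; apply in_flat_map; eauto.
  - apply in_map_iff in Hr; destruct Hr as [d [<- Hd]].
    intros vo' vt' _; apply (holds_atom_comp_interp Dom I f).
    apply (HU (fact_rule (rename_atom f d))); [now apply in_map, in_map|constructor].
Qed.

Definition avoid_interp (o0 : object) : interp (option object) :=
  mkInterp (option object) (fun o => if Nat.eqb o o0 then None else Some o)
    (fun _ l => ~ In (VObj None) l).

Lemma holds_atom_avoid_interp o0 vo vt a :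
  ~ In (OConst o0) (aargs a) ->
  (forall x, In (OVar x) (aargs a) -> vo x <> None) ->
  holds_atom (avoid_interp o0) vo vt a.
Proof.
  intros Hconst Hvar; unfold holds_atom; simpl; intros Hin.
  apply in_map_iff in Hin; destruct Hin as [t [Ht Hin]].
  destruct t; simpl in Ht; try discriminate.
  - destruct (Nat.eqb_spec o o0); [subst; tauto|discriminate].
  - injection Ht; intros; eapply Hvar; eauto.
Qed.

Lemma model_avoid_interp (P : program) (D : dataset) (o0 : object) :
  wf_program P -> is_dataset D ->
  ~ In o0 (program_objs P ++ dataset_objs D) ->
  model (avoid_interp o0) (with_data P D).
Proof.
  intros HP HD Hfresh; unfold model, with_data; apply Forall_app; split.
  - unfold wf_program in HP; rewrite Forall_forall in *; intros r Hr.
    destruct (HP r Hr) as [_ [_ [_ Hsafe]]].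
    intros vo vt Hbody; apply holds_atom_avoid_interp.
    + intros Hin; apply Hfresh, in_or_app; left; apply in_flat_map; exists r.
      split; [auto|apply in_or_app; left; apply in_flat_map; exists (OConst o0); simpl; auto].
    + intros x Hx Hnone.
      assert (Hxb : In (true, x) (flat_map atom_vars (rbody r))).
      { apply Hsafe, in_flat_map; exists (OVar x); simpl; auto. }
      apply in_flat_map in Hxb; destruct Hxb as [b [Hb Hxb]].
      apply in_flat_map in Hxb; destruct Hxb as [t [Ht Hxt]].
      rewrite Forall_forall in Hbody; apply (Hbody b Hb), in_map_iff.
      destruct t; simpl in Hxt; try tauto; destruct Hxt as [Hxt|[]]; try discriminate.
      injection Hxt; intros ->; exists (OVar x); simpl; rewrite Hnone; auto.
  - unfold is_dataset in HD; rewrite Forall_forall in *; intros r Hr.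
    apply in_map_iff in Hr; destruct Hr as [d [<- Hd]].
    destruct (HD d Hd) as [[_ Hground] _]; rewrite Forall_forall in Hground.
    intros vo vt _; apply holds_atom_avoid_interp.
    + intros Hin; apply Hfresh, in_or_app; right; apply in_flat_map; exists d.
      split; [auto|apply in_flat_map; exists (OConst o0); simpl; auto].
    + intros x Hx; specialize (Hground _ Hx); contradiction.
Qed.

Lemma entails_objs_with_data (P : program) (D : dataset) (a : atom) (o : object) :
  wf_program P -> is_dataset D ->
  entails (with_data P D) a -> In (OConst o) (aargs a) ->
  In o (program_objs P ++ dataset_objs D).
Proof.
  intros HP HD Ha Ho.
  destruct (in_dec Nat.eq_dec o (program_objs P ++ dataset_objs D)) as [|Hfresh]; auto.
  exfalso; apply (Ha _ _ (model_avoid_interp P D o HP HD Hfresh) (fun _ => None) (fun _ => 0)).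
  apply in_map_iff; exists (OConst o); simpl; rewrite Nat.eqb_refl; auto.
Qed.

Lemma fact_time_rename f a : fact_time (rename_atom f a) = fact_time a.
Proof.
  unfold fact_time, rename_atom; simpl; rewrite <- map_rev.
  destruct (rev (aargs a)) as [|[] l]; reflexivity.
Qed.

Lemma update_rename (tin : timept) (f : object -> object) (U : dataset) :
  update tin U -> update tin (map (rename_atom f) U).
Proof.
  intros [HU Htime]; split; [unfold is_dataset in *|]; rewrite Forall_map.
  - eapply Forall_impl; [|exact HU]; intros a [[[Hsorted Hrt] Hground] Hedb].
    repeat split; auto; simpl.
    + unfold well_sorted in *; simpl; rewrite map_map, <- Hsorted.
      apply map_ext; now intros [].
    + rewrite Forall_map; eapply Forall_impl; [|exact Hground]; now intros [].
  - eapply Forall_impl; [|exact Htime]; intros a; simpl; now rewrite fact_time_rename.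
Qed.

Lemma dataset_objs_rename f U x :
  In x (dataset_objs (map (rename_atom f) U)) -> exists y, x = f y.
Proof.
  unfold dataset_objs; rewrite flat_map_concat_map, map_map, <- flat_map_concat_map.
  intros Hx; apply in_flat_map in Hx; destruct Hx as [a [_ Hx]].
  unfold atom_objs, rename_atom in Hx; simpl in Hx; apply in_flat_map in Hx.
  destruct Hx as [t [Ht Hx]]; apply in_map_iff in Ht; destruct Ht as [[] [<- _]];
    simpl in Hx; try tauto.
  destruct Hx as [<-|[]]; eauto.
Qed.

Definition collapse_outside (C : list object) (o0 : object) (x : object) : object :=
  if in_dec Nat.eq_dec x C then x else o0.

Lemma collapse_outside_id C o0 x : In x C -> collapse_outside C o0 x = x.
Proof. unfold collapse_outside; destruct (in_dec Nat.eq_dec x C); tauto. Qed.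

Lemma collapse_outside_in C o0 x : In (collapse_outside C o0 x) (o0 :: C).
Proof. unfold collapse_outside; destruct (in_dec Nat.eq_dec x C); simpl; auto. Qed.

Lemma collapse_outside_fresh_in C o0 x :
  ~ In o0 C -> In (collapse_outside C o0 x) C -> In x C.
Proof. unfold collapse_outside; destruct (in_dec Nat.eq_dec x C); tauto. Qed.

Lemma answer_rename (Q : query) (D U : dataset) (tau : timept) (o : list object)
  (f : object -> object) :
  (forall x, In x (program_objs (qprog Q) ++ dataset_objs D) -> f x = x) ->
  answer Q (D ++ U) tau o -> answer Q (D ++ map (rename_atom f) U) tau (map f o).
Proof.
  intros Hfix [Hlen Ho]; split; [now rewrite length_map|].
  generalize (entails_rename _ _ _ _ f Hfix Ho).
  unfold rename_atom; simpl; now rewrite map_app, !map_map.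
Qed.

Lemma answer_objs (Q : query) (D : dataset) (tau : timept) (o : list object) :
  wf_program (qprog Q) -> is_dataset D -> answer Q D tau o ->
  forall x, In x o -> In x (program_objs (qprog Q) ++ dataset_objs D).
Proof.
  intros HP HD [_ Ho] x Hx; apply (entails_objs_with_data _ _ _ _ HP HD Ho); simpl.
  apply in_or_app; left; now apply in_map.
Qed.

Theorem proposition1 (Q : query) (D : dataset) (tin tout : Z)
  (HI : DTP_instance Q D tin tout)
  (oI : object)
  (Hfresh : ~ In oI (program_objs (qprog Q) ++ dataset_objs D)) :
  let C := oI :: (program_objs (qprog Q) ++ dataset_objs D) in
  DTP Q D tin tout <->
  (forall (o : list object) (U : dataset),
     (forall x, In x o -> In x C) ->
     update tin U ->
     (forall x, In x (dataset_objs U) -> In x C) ->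
     answer Q (D ++ U) tout o -> answer Q D tout o).
Proof.
  intros C; split; [intros HDTP o U _ HU _; apply (HDTP U HU o)|].
  intros Hsmall U HU o; split; [intros [Hlen Ho]; split; auto; now apply entails_with_data_app|].
  intros HDU.
  destruct HI as [[HP _] [[HD _] _]].
  set (f := collapse_outside (program_objs (qprog Q) ++ dataset_objs D) oI).
  assert (Hfo : answer Q D tout (map f o)).
  { apply Hsmall with (U := map (rename_atom f) U).
    - intros x Hx; apply in_map_iff in Hx; destruct Hx as [y [<- _]]; apply collapse_outside_in.
    - now apply update_rename.
    - intros x Hx; destruct (dataset_objs_rename f U x Hx) as [y ->]; apply collapse_outside_in.
    - apply answer_rename; auto; apply collapse_outside_id. }
  replace o with (map f o); auto.
  rewrite <- (map_id o) at 2; apply map_ext_in; intros x Hx.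
  apply collapse_outside_id, (collapse_outside_fresh_in _ oI); auto.
  apply (answer_objs Q D tout (map f o) HP HD Hfo), in_map, Hx.
Qed.
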